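(* Let $\Lambda$ be a normal two-sorted term-modal logic and let $\Gamma$ be a $\Lambda$-consistent set of formulas of $\mathcal L$. Then there exists a $\Lambda$-consistent set $\Gamma_+$ of formulas of $\mathcal L^+$ with the $\forall$-property such that $\Gamma\subseteq\Gamma_+$.
   Context: Fix a finite nonempty set of agents $\mathcal A$ with $n=|\mathcal A|$ and two sorts $agt$, $obj$. The language $\mathcal L$ has countably infinite sets $VAR_{agt}$, $VAR_{obj}$ of variables, countable (possibly empty) sets of sorted constants, sorted function symbols (arity $\alpha\in\{agt,obj\}^{k+1}$) and sorted relation symbols (arity $\beta\in\{agt,obj\}^k$, $k\ge1$), $=$, $\neg,\to,\forall$, and operators $K_t$ for agent-sorted terms $t$; formulas: $t_1=t_2$, sort-correct $P(t_1,\dots,t_k)$, $\neg\varphi$, $\varphi\to\psi$, $\forall x\varphi$, $K_t\varphi$. Free variables as usual, those of $K_t\varphi$ being those of $t$ and $\varphi$; $\varphi(y/x)$ is substitution of $y$ for free occurrences of $x$. $\mathcal L^+$ is the language obtained from $\mathcal L$ by adding countably infinitely many new variables of each sort. A normal two-sorted term-modal logic $\Lambda$ (over $\mathcal L^+$) is a set of formulas containing: all substitution instances of valid formulas of propositional modal logic; ($\forall$) $\forall x\varphi\to\varphi(y/x)$ for $y$ a variable free in $\varphi$; (Id) $t=t$; (MSD) $x\neq y$ for $x$ agent-sorted, $y$ object-sorted variables; (PS) $(x=y)\to(\varphi(x)\to\varphi(y))$; ($\exists$Id) $(c=c)\to\exists x(x=c)$ for constants $c$; (N) $\exists x_1\cdots\exists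 x_n(x_1\neq x_2\wedge\dots\wedge x_{n-1}\neq x_n\wedge\forall y(y=x_1\vee\dots\vee y=x_n))$ for agent variables; (K) $K_t(\varphi\to\psi)\to(K_t\varphi\to K_t\psi)$; (BF) $\forall xK_t\varphi\to K_t\forall x\varphi$, $x\neq t$; (KNI) $(x\neq y)\to K_t(x\neq y)$; and closed under modus ponens, (KG) from $\varphi$ infer $K_t\varphi$, and (Gen) from $\varphi\to\psi$ infer $\varphi\to\forall x\psi$ when $x$ is not free in $\varphi$. $\Gamma\vdash_\Lambda\varphi$ iff $\bigwedge\Gamma_0\to\varphi\in\Lambda$ for some finite $\Gamma_0\subseteq\Gamma$; $\Gamma$ is $\Lambda$-consistent iff $\Gamma\not\vdash_\Lambda\varphi\wedge\neg\varphi$ for every formula $\varphi$. A set $\Gamma$ has the $\forall$-property if for every formula $\varphi$ and every variable $x$ there is a variable $y$ with $(\varphi(y/x)\to\forall x\varphi)\in\Gamma$. *)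

From HB Require Import structures.
From mathcomp Require Import all_boot.
From Stdlib Require List.

Set Implicit Arguments.
Unset Strict Implicit.
Unset Printing Implicit Defensive.

Inductive srt := agt | obj.

Definition srt_eqb (a b : srt) : bool :=
  match a, b with agt, agt | obj, obj => true | _, _ => false end.
Lemma srt_eqP : Equality.axiom srt_eqb.
Proof. by case; case; constructor. Qed.
HB.instance Definition _ := hasDecEq.Build srt srt_eqP.

Record signature := Signature {
  Cst : countType;
  Fun : countType;
  Rl  : countType;
  csort : Cst -> srt;
  fsig  : Fun -> seq srt * srt;        (* (argument sorts, result sort), arity k+1, k >= 0 *)
  rsig  : Rl -> seq srt;
  rsig_pos : forall r, 0 < size (rsig r)
}.

(* Variables with fresh = false are the
   (countably infinitely many per sort) variables of L; those with fresh = true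
   are the countably infinitely many new variables of each sort added in L+. *)
Definition var := (srt * nat * bool)%type.
Definition vsort (x : var) : srt := x.1.1.
Definition vfresh (x : var) : bool := x.2.

Section Syntax.
Variable S : signature.

Inductive term :=
  | TVar of var
  | TConst of Cst S
  | TApp of Fun S & seq term.

Fixpoint tsort (t : term) : option srt :=
  match t with
  | TVar x => Some (vsort x)
  | TConst c => Some (csort c)
  | TApp f ts =>
      if map tsort ts == map Some (fsig f).1 then Some (fsig f).2 else None
  end.

Fixpoint tvars (t : term) : seq var :=
  match t with
  | TVar x => [:: x]
  | TConst _ => [::]
  | TApp _ ts => flatten (map tvars ts)
  end.

Fixpoint tsubst (y x : var) (t : term) : term :=
  match t with
  | TVar z => if z == x then TVar y else TVar z
  | TConst c => TConst c
  | TApp f ts => TApp f (map (tsubst y x) ts)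
  end.

Inductive form :=
  | Eq of term & term
  | Rel of Rl S & seq term
  | Neg of form
  | Imp of form & form
  | All of var & form
  | Know of term & form.

Definition And (a b : form) := Neg (Imp a (Neg b)).
Definition Or (a b : form) := Imp (Neg a) b.
Definition Ex (x : var) (a : form) := Neg (All x (Neg a)).

Fixpoint bigAnd (a : form) (l : seq form) : form :=
  match l with [::] => a | b :: l' => And a (bigAnd b l') end.
Fixpoint bigOr (a : form) (l : seq form) : form :=
  match l with [::] => a | b :: l' => Or a (bigOr b l') end.

Fixpoint wf (p : form) : bool :=
  match p with
  | Eq t1 t2 => (tsort t1 != None) && (tsort t2 != None)
  | Rel r ts => map tsort ts == map Some (rsig r)
  | Neg a => wf a
  | Imp a b => wf a && wf b
  | All _ a => wf a
  | Know t a => (tsort t == Some agt) && wf a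
  end.

Fixpoint vars (p : form) : seq var :=
  match p with
  | Eq t1 t2 => tvars t1 ++ tvars t2
  | Rel _ ts => flatten (map tvars ts)
  | Neg a => vars a
  | Imp a b => vars a ++ vars b
  | All x a => x :: vars a
  | Know t a => tvars t ++ vars a
  end.

Definition inL (p : form) : bool := all (fun x => ~~ vfresh x) (vars p).

Fixpoint free (x : var) (p : form) : bool :=
  match p with
  | Eq t1 t2 => (x \in tvars t1) || (x \in tvars t2)
  | Rel _ ts => has (fun t => x \in tvars t) ts
  | Neg a => free x a
  | Imp a b => free x a || free x b
  | All z a => (z != x) && free x a
  | Know t a => (x \in tvars t) || free x a
  end.

Fixpoint subst (y x : var) (p : form) : form :=
  match p with
  | Eq t1 t2 => Eq (tsubst y x t1) (tsubst y x t2)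
  | Rel r ts => Rel r (map (tsubst y x) ts)
  | Neg a => Neg (subst y x a)
  | Imp a b => Imp (subst y x a) (subst y x b)
  | All z a => if z == x then All z a else All z (subst y x a)
  | Know t a => Know (tsubst y x t) (subst y x a)
  end.

(* y is free for x in p (no free occurrence of x lies in the scope of a
   quantifier binding y) *)
Fixpoint freefor (y x : var) (p : form) : bool :=
  match p with
  | Eq _ _ | Rel _ _ => true
  | Neg a => freefor y x a
  | Imp a b => freefor y x a && freefor y x b
  | All z a => (z == x) || ((~~ free x a || (z != y)) && freefor y x a)
  | Know _ a => freefor y x a
  end.

(* propositional (truth-functional) evaluation, treating every formula whose
   main connective is not neg / imp as a propositional atom *)
Fixpoint teval (v : form -> bool) (p : form) : bool :=
  match p with
  | Neg a => ~~ teval v a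
  | Imp a b => teval v a ==> teval v b
  | _ => v p
  end.
Definition taut (p : form) : Prop := forall v, teval v p.

Fixpoint distinct_forms (l : seq var) : seq form :=
  match l with
  | [::] => [::]
  | x :: l' => [seq Neg (Eq (TVar x) (TVar z)) | z <- l'] ++ distinct_forms l'
  end.

Definition N_form (xs : seq var) (y : var) : form :=
  foldr Ex
    (let last := All y (match [seq Eq (TVar y) (TVar x) | x <- xs] with
                        | [::] => Neg (Eq (TVar y) (TVar y))  (* unused: xs nonempty *)
                        | a :: l => bigOr a l end) in
     match distinct_forms xs with
     | [::] => last
     | a :: l => bigAnd a (rcons l last)
     end) xs.

(* normal two-sorted term-modal logic over L+ with n = #|A| agents *)
Definition normal_tml (A : finType) (Lam : form -> Prop) : Prop :=
  (forall p, Lam p -> wf p) /\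
  (* substitution instances of propositional (modal) validities *)
  (forall p, wf p -> taut p -> Lam p) /\
  (forall x y p, vsort y = vsort x -> freefor y x p -> wf p ->
     Lam (Imp (All x p) (subst y x p))) /\
  (forall t, tsort t != None -> Lam (Eq t t)) /\
  (forall x y, vsort x = agt -> vsort y = obj -> Lam (Neg (Eq (TVar x) (TVar y)))) /\
  (forall x y p, vsort x = vsort y -> freefor y x p -> wf p ->
     Lam (Imp (Eq (TVar x) (TVar y)) (Imp p (subst y x p)))) /\
  (forall c x, vsort x = csort c ->
     Lam (Imp (Eq (TConst c) (TConst c)) (Ex x (Eq (TVar x) (TConst c))))) /\
  (forall xs y, size xs = #|A| -> uniq xs -> all (fun x => vsort x == agt) xs ->
     vsort y = agt -> y \notin xs -> Lam (N_form xs y)) /\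
  (forall t p q, tsort t = Some agt -> wf p -> wf q ->
     Lam (Imp (Know t (Imp p q)) (Imp (Know t p) (Know t q)))) /\
  (forall x t p, tsort t = Some agt -> x \notin tvars t -> wf p ->
     Lam (Imp (All x (Know t p)) (Know t (All x p)))) /\
  (forall x y t, tsort t = Some agt ->
     Lam (Imp (Neg (Eq (TVar x) (TVar y))) (Know t (Neg (Eq (TVar x) (TVar y)))))) /\
  (forall p q, Lam (Imp p q) -> Lam p -> Lam q) /\
  (forall t p, tsort t = Some agt -> Lam p -> Lam (Know t p)) /\
  (forall x p q, Lam (Imp p q) -> ~~ free x p -> Lam (Imp p (All x q))).

Definition derives (Lam Gam : form -> Prop) (p : form) : Prop :=
  exists l : seq form, (forall q, List.In q l -> Gam q) /\
    Lam (match l with [::] => p | a :: l' => Imp (bigAnd a l') p end).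

Definition consistent (Lam Gam : form -> Prop) : Prop :=
  forall p, ~ derives Lam Gam (And p (Neg p)).

Definition forall_property (Gam : form -> Prop) : Prop :=
  forall p x, wf p -> exists y : var, vsort y = vsort x /\ Gam (Imp (subst y x p) (All x p)).

End Syntax.

From HB Require Import structures.
From mathcomp Require Import all_boot.
From Stdlib Require List Cantor.
From Stdlib Require Import Classical Lia.

Set Implicit Arguments.
Unset Strict Implicit.
Unset Printing Implicit Defensive.

(* Henkin's construction.  Every pair (p, x) gets its own witness y_(p,x), a
   new variable of L+ whose index exceeds that of every variable of p and x
   and determines (p, x); Gamma_+ adds the Henkin axioms
   p(y_(p,x)/x) -> forall x p to Gamma.  Each finite part of Gamma_+ lies in
   some stage Gamma_n, which contains only the Henkin axioms of index below n.
   Adding the axiom of index n to Gamma_n preserves consistency: if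
   Gamma_n |- ~(p(y/x) -> forall x p) then Gamma_n |- p(y/x), and since y
   occurs neither in Gamma_n nor in p, generalising on y and renaming y back
   to x yields Gamma_n |- forall x p, while also Gamma_n |- ~ forall x p.
   Only the propositional part of the logic, (forall), modus ponens and (Gen)
   are used. *)

Definition srt_to_bool (s : srt) : bool := if s is agt then true else false.
Definition srt_of_bool (b : bool) : srt := if b then agt else obj.
Lemma srt_to_boolK : cancel srt_to_bool srt_of_bool. Proof. by case. Qed.
HB.instance Definition _ := CanIsCountable srt_to_boolK.

Lemma split_In_sub_cons (T : Type) (P : T -> Prop) (a : T) (l : seq T) :
  (forall q, List.In q l -> P q \/ q = a) ->
  exists l', (forall q, List.In q l' -> P q) /\
             (forall q, List.In q l -> q = a \/ List.In q l').
Proof.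
elim: l => [|b l IH] lPa; first by exists [::].
have [l' [l'P ll']] := IH (fun q hq => lPa q (or_intror hq)).
case: (lPa b (or_introl erefl)) => [Pb|->].
- exists (b :: l'); split; first by move=> q [<-|/l'P].
  by move=> q [<-|/ll' [->|h]]; [right; left|left|right; right].
- by exists l'; split => // q [<-|/ll']; [left|].
Qed.

Section Substitution.
Variable S : signature.
Implicit Types (t : term S) (p : form S).

Fixpoint term_nested_ind (P : term S -> Prop)
  (HV : forall x, P (TVar S x)) (HC : forall c, P (TConst c))
  (HA : forall f ts, List.Forall P ts -> P (TApp f ts)) t : P t :=
  match t with
  | TVar x => HV x
  | TConst c => HC c
  | TApp f ts => HA f ts ((fix go (l : seq (term S)) : List.Forall P l :=
       match l with
       | [::] => List.Forall_nil _
       | u :: l' => List.Forall_cons _ (term_nested_ind HV HC HA u) (go l')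
       end) ts)
  end.

Lemma tsort_tsubst y x t : vsort y = vsort x -> tsort (tsubst y x t) = tsort t.
Proof.
move=> yx; elim/term_nested_ind: t => [z|c|f ts IH] //=.
- by case: eqP => [->|]; rewrite /= ?yx.
- suff -> : map (@tsort S) (map (tsubst y x) ts) = map (@tsort S) ts by [].
  by rewrite -map_comp; elim: IH => //= u l -> _ ->.
Qed.

Lemma wf_subst y x p : vsort y = vsort x -> wf (subst y x p) = wf p.
Proof.
move=> yx; elim: p => [t1 t2|r ts|a IH|a IHa b IHb|z a IH|t a IH] /=.
- by rewrite !tsort_tsubst.
- by rewrite -map_comp; congr (_ == _); apply: eq_map => u /=; exact: tsort_tsubst.
- done.
- by rewrite IHa IHb.
- by case: eqP.
- by rewrite tsort_tsubst // IH.
Qed.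

Lemma tsubst_id y x t : x \notin tvars t -> tsubst y x t = t.
Proof.
elim/term_nested_ind: t => [z|c|f ts IH] //=.
- by rewrite inE; case: (z =P x) => // ->; rewrite eqxx.
- move=> xts; congr TApp; elim: IH xts => //= u l Hu _ IHl.
  by rewrite mem_cat negb_or => /andP[/Hu -> /IHl ->].
Qed.

Lemma subst_id y x p : x \notin vars p -> subst y x p = p.
Proof.
elim: p => [t1 t2|r ts|a IH|a IHa b IHb|z a IH|t a IH] /=.
- by rewrite mem_cat negb_or => /andP[h1 h2]; rewrite !tsubst_id.
- move=> xts; congr Rel; elim: ts xts => //= u l IHl.
  by rewrite mem_cat negb_or => /andP[h1 /IHl ->]; rewrite tsubst_id.
- by move/IH->.
- by rewrite mem_cat negb_or => /andP[/IHa-> /IHb->].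
- by rewrite inE negb_or => /andP[_ /IH->]; case: eqP.
- by rewrite mem_cat negb_or => /andP[h1 /IH ->]; rewrite tsubst_id.
Qed.

Lemma tsubstK y x t : y \notin tvars t -> tsubst x y (tsubst y x t) = t.
Proof.
elim/term_nested_ind: t => [z|c|f ts IH] //=.
- rewrite inE => yz; case: eqP => [->|_] /=; first by rewrite eqxx.
  by case: (z =P y) yz => [->|//]; rewrite eqxx.
- move=> yts; congr TApp; rewrite -map_comp; elim: IH yts => //= u l Hu _ IHl.
  by rewrite mem_cat negb_or => /andP[/Hu -> /IHl ->].
Qed.

Lemma substK y x p : y != x -> y \notin vars p -> subst x y (subst y x p) = p.
Proof.
move=> yx; elim: p => [t1 t2|r ts|a IH|a IHa b IHb|z a IH|t a IH] /=.
- by rewrite mem_cat negb_or => /andP[h1 h2]; rewrite !tsubstK.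
- move=> yts; congr Rel; rewrite -map_comp; elim: ts yts => //= u l IHl.
  by rewrite mem_cat negb_or => /andP[h1 /IHl ->]; rewrite tsubstK.
- by move/IH ->.
- by rewrite mem_cat negb_or => /andP[/IHa -> /IHb ->].
- rewrite inE negb_or => /andP[yz ya]; case: (z =P x) => [->|_] /=.
  + by rewrite eq_sym (negbTE yx) subst_id.
  + by rewrite eq_sym (negbTE yz) IH.
- by rewrite mem_cat negb_or => /andP[h1 /IH ->]; rewrite tsubstK.
Qed.

Lemma tvars_tsubst_self y x t : y != x -> x \notin tvars (tsubst y x t).
Proof.
move=> yx; elim/term_nested_ind: t => [z|c|f ts IH] //=.
- by case: (z =P x) => [_|/eqP zx]; rewrite inE eq_sym.
- by elim: IH => //= u l Hu _ IHl; rewrite mem_cat negb_or Hu.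
Qed.

Lemma free_subst_self y x p : y != x -> free x (subst y x p) = false.
Proof.
move=> yx; elim: p => [t1 t2|r ts|a IH|a IHa b IHb|z a IH|t a IH] /=.
- by rewrite !(negbTE (tvars_tsubst_self _ yx)).
- by apply/negbTE; elim: ts => //= u l IHl; rewrite negb_or IHl tvars_tsubst_self.
- done.
- by rewrite IHa IHb.
- by case: (z =P x) => [->|_] /=; rewrite ?eqxx ?IH ?andbF.
- by rewrite (negbTE (tvars_tsubst_self _ yx)) IH.
Qed.

Lemma free_mem_vars y p : free y p -> y \in vars p.
Proof.
elim: p => [t1 t2|r ts|a IH|a IHa b IHb|z a IH|t a IH] /=.
- by rewrite mem_cat.
- by elim: ts => //= u l IHl; rewrite mem_cat => /orP[->|/IHl ->]; rewrite ?orbT.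
- done.
- by rewrite mem_cat => /orP[/IHa|/IHb] ->; rewrite ?orbT.
- by case/andP=> _ /IH; rewrite inE => ->; rewrite orbT.
- by rewrite mem_cat => /orP[->|/IH ->]; rewrite ?orbT.
Qed.

Lemma freefor_notfree y x p : ~~ free x p -> freefor y x p.
Proof.
elim: p => [t1 t2|r ts|a IH|a IHa b IHb|z a IH|t a IH] //=.
- by rewrite negb_or => /andP[/IHa -> /IHb ->].
- by case: (z =P x) => //= _ xa; rewrite xa IH.
- by rewrite negb_or => /andP[_ /IH].
Qed.

Lemma freefor_substK y x p : y \notin vars p -> freefor x y (subst y x p).
Proof.
elim: p => [t1 t2|r ts|a IH|a IHa b IHb|z a IH|t a IH] //=.
- by rewrite mem_cat negb_or => /andP[/IHa -> /IHb ->].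
- rewrite inE negb_or => /andP[yz ya]; case: (z =P x) => [->|zx] /=.
  + have ny : ~~ free y a by apply: contra ya; exact: free_mem_vars.
    by rewrite ny freefor_notfree ?orbT.
  + by move/eqP: zx => zx; rewrite IH // zx !orbT.
- by rewrite mem_cat negb_or => /andP[_ /IH].
Qed.

Lemma mem_tvars_tsubst y x z t :
  z \in tvars (tsubst y x t) -> z = y \/ z \in tvars t.
Proof.
elim/term_nested_ind: t => [w|c|f ts IH] //=.
- by case: (w =P x) => _; rewrite inE => /eqP ->; [left|right].
- elim: IH => //= u l Hu _ IHl; rewrite !mem_cat => /orP[/Hu|/IHl] [->|h];
  by [left|right; rewrite h ?orbT].
Qed.

Lemma mem_vars_subst y x z p :
  z \in vars (subst y x p) -> z = y \/ z \in vars p.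
Proof.
elim: p => [t1 t2|r ts|a IH|a IHa b IHb|w a IH|t a IH] //=.
- by rewrite !mem_cat => /orP[|] /mem_tvars_tsubst [->|h]; [left|right; rewrite h|left|right; rewrite h orbT].
- elim: ts => //= u l IHl; rewrite !mem_cat => /orP[/mem_tvars_tsubst|/IHl] [->|h];
  by [left|right; rewrite h ?orbT].
- by rewrite !mem_cat => /orP[/IHa|/IHb] [->|h]; [left|right; rewrite h|left|right; rewrite h orbT].
- case: (w =P x) => _ /=; rewrite !inE; first by right.
  by case/orP=> [->|/IH [->|h]]; [right|left|right; rewrite h orbT].
- by rewrite !mem_cat => /orP[/mem_tvars_tsubst|/IH] [->|h]; [left|right; rewrite h|left|right; rewrite h orbT].
Qed.

End Substitution.

Lemma pickle_inj (T : countType) : injective (@pickle T).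
Proof. exact: pcan_inj (@pickleK T). Qed.

Section HenkinWitnesses.
Variable S : signature.
Implicit Types (t : term S) (p : form S) (x : var).

Fixpoint tcode t : GenTree.tree nat :=
  match t with
  | TVar x => GenTree.Node 0 [:: GenTree.Leaf (pickle x)]
  | TConst c => GenTree.Node 1 [:: GenTree.Leaf (pickle c)]
  | TApp f ts => GenTree.Node 2 (GenTree.Leaf (pickle f) :: map tcode ts)
  end.

Fixpoint fcode p : GenTree.tree nat :=
  match p with
  | Eq t1 t2 => GenTree.Node 3 [:: tcode t1; tcode t2]
  | Rel r ts => GenTree.Node 4 (GenTree.Leaf (pickle r) :: map tcode ts)
  | Neg a => GenTree.Node 5 [:: fcode a]
  | Imp a b => GenTree.Node 6 [:: fcode a; fcode b]
  | All x a => GenTree.Node 7 [:: GenTree.Leaf (pickle x); fcode a]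
  | Know t a => GenTree.Node 8 [:: tcode t; fcode a]
  end.

Lemma tcode_inj : injective tcode.
Proof.
move=> t; elim/term_nested_ind: t => [x|c|f ts IH] [x'|c'|f' ts'] //=.
- by case=> /pickle_inj ->.
- by case=> /pickle_inj ->.
- case=> /pickle_inj -> e; congr TApp.
  by elim: IH ts' e => [|u l Hu _ IHl] [|u' l'] //= [/Hu -> /IHl ->].
Qed.

Lemma fcode_inj : injective fcode.
Proof.
have tcodes_inj := inj_map tcode_inj.
elim=> [t1 t2|r ts|a IH|a IHa b IHb|z a IH|t a IH]
  [t1' t2'|r' ts'|a'|a' b'|z' a'|t' a'] //=.
- by case=> /tcode_inj -> /tcode_inj ->.
- by case=> /pickle_inj -> /tcodes_inj ->.
- by case=> /IH ->.
- by case=> /IHa -> /IHb ->.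
- by case=> /pickle_inj -> /IH ->.
- by case=> /tcode_inj -> /IH ->.
Qed.

Definition max_index p x : nat := \max_(z <- x :: vars p) z.1.2.

Definition henkin_index p x : nat :=
  Cantor.to_nat ((pickle (fcode p, x)).+1, max_index p x).

Lemma max_index_lt p x : max_index p x < henkin_index p x.
Proof.
have := Cantor.to_nat_non_decreasing (pickle (fcode p, x)).+1 (max_index p x).
by rewrite /henkin_index => h; apply/leP; lia.
Qed.

Lemma henkin_index_inj p p' x x' :
  henkin_index p x = henkin_index p' x' -> p = p' /\ x = x'.
Proof.
move/(f_equal Cantor.of_nat); rewrite !Cantor.cancel_of_to.
by case=> /pickle_inj [/fcode_inj -> ->].
Qed.

Definition henkin_witness p x : var := (vsort x, henkin_index p x, true).

Definition henkin_axiom p x : form S :=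
  Imp (subst (henkin_witness p x) x p) (All x p).

Lemma leq_max_index p x z : z \in x :: vars p -> z.1.2 <= max_index p x.
Proof. by move=> zp; rewrite /max_index (leq_bigmax_seq z). Qed.

Lemma henkin_witness_fresh p x : henkin_witness p x \notin x :: vars p.
Proof. by apply: contraL (max_index_lt p x) => /leq_max_index; rewrite leqNgt. Qed.

Lemma mem_vars_henkin_axiom p x z :
  z \in vars (henkin_axiom p x) -> z.1.2 <= henkin_index p x.
Proof.
have le_henkin w : w \in x :: vars p -> w.1.2 <= henkin_index p x.
  by move/leq_max_index/leq_trans; apply; exact/ltnW/max_index_lt.
rewrite /= mem_cat => /orP[/mem_vars_subst [-> //|zp] | zx].
- by apply: le_henkin; rewrite inE zp orbT.
- exact: le_henkin.
Qed.

Lemma wf_henkin_axiom p x : wf (henkin_axiom p x) = wf p.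
Proof. by rewrite /= wf_subst // andbb. Qed.

End HenkinWitnesses.

Section HenkinExtension.
Variables (S : signature) (Lam : form S -> Prop).
Implicit Types (p q r : form S) (l : seq (form S)) (x y : var).

Hypothesis Lam_wf : forall p, Lam p -> wf p.
Hypothesis Lam_taut : forall p, wf p -> taut p -> Lam p.
Hypothesis Lam_inst : forall x y p, vsort y = vsort x -> freefor y x p -> wf p ->
  Lam (Imp (All x p) (subst y x p)).
Hypothesis Lam_mp : forall p q, Lam (Imp p q) -> Lam p -> Lam q.
Hypothesis Lam_gen : forall x p q, Lam (Imp p q) -> ~~ free x p -> Lam (Imp p (All x q)).

Definition hyps_imp l p : form S :=
  match l with [::] => p | a :: l' => Imp (bigAnd a l') p end.

Lemma teval_bigAnd v a l : teval v (bigAnd a l) = teval v a && all (teval v) l.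
Proof. by elim: l a => [|b l IH] a /=; rewrite ?andbT // IH negb_imply negbK. Qed.

Lemma wf_bigAnd a l : wf (bigAnd a l) = wf a && all (@wf S) l.
Proof. by elim: l a => [|b l IH] a /=; rewrite ?andbT // IH. Qed.

Lemma free_bigAnd y a l : free y (bigAnd a l) = free y a || has (free y) l.
Proof. by elim: l a => [|b l IH] a /=; rewrite ?orbF // IH. Qed.

Lemma teval_hyps_imp v l p : teval v (hyps_imp l p) = all (teval v) l ==> teval v p.
Proof. by case: l => [|a l] //=; rewrite teval_bigAnd. Qed.

Lemma wf_hyps_imp l p : wf (hyps_imp l p) = all (@wf S) l && wf p.
Proof. by case: l => [|a l] //=; rewrite wf_bigAnd. Qed.

Lemma all_In (P : pred (form S)) l : (forall q, List.In q l -> P q) <-> all P l.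
Proof.
elim: l => [|a l IH] /=; first by split.
split=> [Pl|/andP[Pa /IH Pl] q [<-|/Pl] //].
by rewrite Pl /=; [apply/IH => q ql; apply: Pl; right|left].
Qed.

Lemma teval_foldr_Imp v ps q :
  teval v (foldr (@Imp S) q ps) = all (teval v) ps ==> teval v q.
Proof. by elim: ps => //= a l ->; case: (teval v a). Qed.

Lemma wf_foldr_Imp ps q : wf (foldr (@Imp S) q ps) = all (@wf S) ps && wf q.
Proof. by elim: ps => //= a l ->; rewrite andbA. Qed.

Lemma Lam_taut_consequence ps q :
  (forall v, all (teval v) ps -> teval v q) -> wf q ->
  (forall p, List.In p ps -> Lam p) -> Lam q.
Proof.
move=> ps_q wq Lps.
have Lfold : Lam (foldr (@Imp S) q ps).
  apply: Lam_taut => [|v]; last by rewrite teval_foldr_Imp; apply/implyP/ps_q.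
  by rewrite wf_foldr_Imp wq andbT; apply/all_In => p /Lps /Lam_wf.
elim: ps {ps_q} Lps Lfold => //= a l IH Lps Lfold.
apply: IH => [p hp|]; first by apply: Lps; right.
by apply: Lam_mp Lfold _; apply: Lps; left.
Qed.

Lemma Lam_imp_trans p q r : Lam (Imp p q) -> Lam (Imp q r) -> Lam (Imp p r).
Proof.
move=> Lpq Lqr; apply: (Lam_taut_consequence (ps := [:: Imp p q; Imp q r])).
- by move=> v /=; case: (teval v p); case: (teval v q); case: (teval v r).
- by move: (Lam_wf Lpq) (Lam_wf Lqr) => /= /andP[-> _] /andP[_ ->].
- by move=> s [<-|[<-|]].
Qed.

Lemma Lam_generalize_witness C p x y :
  ~~ free y C -> y \notin x :: vars p -> vsort y = vsort x -> wf p ->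
  Lam (Imp C (subst y x p)) -> Lam (Imp C (All x p)).
Proof.
rewrite inE negb_or => yC /andP[yx yp] yxs wp LC.
have rename_back : Lam (Imp (All y (subst y x p)) p).
  rewrite -[X in Imp _ X](substK yx yp).
  by apply: Lam_inst; rewrite ?freefor_substK ?wf_subst.
apply: Lam_imp_trans (Lam_gen LC yC) (Lam_gen rename_back _).
by rewrite /= free_subst_self ?andbF.
Qed.

(* L has no propositional constant; this tautology serves as the empty
   conjunction. *)
Definition verum x : form S := Imp (Eq (TVar S x) (TVar S x)) (Eq (TVar S x) (TVar S x)).

Lemma consistent_add_henkin_axiom (Del Del' : form S -> Prop) p x y :
  consistent Lam Del -> (forall q, Del q -> wf q) ->
  (forall q, Del q -> y \notin vars q) ->
  y \notin x :: vars p -> vsort y = vsort x -> wf p ->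
  (forall q, Del' q -> Del q \/ q = Imp (subst y x p) (All x p)) ->
  consistent Lam Del'.
Proof.
move=> Del_cons Del_wf Del_y y_fresh yxs wp Del'_sub r [l [lDel' Ll]].
have [l' [l'Del ll']] := split_In_sub_cons (fun q ql => Del'_sub q (lDel' q ql)).
have yx : y != x by apply: contraNneq y_fresh => ->; exact: mem_head.
set C := bigAnd (verum x) l'.
have wC : wf C by rewrite wf_bigAnd; apply/all_In => q /l'Del /Del_wf.
have tC v : teval v C = all (teval v) l' by rewrite teval_bigAnd /= implybb.
have yC : ~~ free y C.
  rewrite free_bigAnd /= mem_seq1 (negbTE yx) /= -all_predC.
  by apply/all_In => q /l'Del /Del_y; apply: contra; exact: free_mem_vars.
have refute : Lam (Imp C (Neg (Imp (subst y x p) (All x p)))).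
  apply: (Lam_taut_consequence (ps := [:: hyps_imp l (And r (Neg r))])); last first.
  - by move=> q [<-|].
  - by rewrite /= wC wf_subst ?wp.
  move=> v /=; rewrite andbT teval_hyps_imp tC /= => l_false.
  apply/implyP => /all_In l'_true; apply/negP => henkin_true; move: l_false.
  suff -> : all (teval v) l by case: (teval v r).
  by apply/all_In => q /ll' [->|/l'_true].
have Cy : Lam (Imp C (subst y x p)).
  apply: (Lam_imp_trans refute); apply: Lam_taut => [|v] /=; first by rewrite wf_subst ?wp.
  by case: (teval v (subst y x p)); case: (v (All x p)).
have Cn : Lam (Imp C (Neg (All x p))).
  apply: (Lam_imp_trans refute); apply: Lam_taut => [|v] /=; first by rewrite wf_subst ?wp.
  by case: (teval v (subst y x p)); case: (v (All x p)).
have Ca := Lam_generalize_witness yC y_fresh yxs wp Cy.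
apply: (Del_cons (All x p)); exists l'; split=> //.
apply: (Lam_taut_consequence (ps := [:: Imp C (All x p); Imp C (Neg (All x p))])).
- by move=> v /=; rewrite teval_hyps_imp tC; case: (all _ _); case: (v (All x p)).
- by rewrite wf_hyps_imp /= wp !andbT; apply/all_In => q /l'Del /Del_wf.
- by move=> q [<-|[<-|]].
Qed.

Lemma consistent_sub (Del Del' : form S -> Prop) :
  consistent Lam Del -> (forall q, Del' q -> Del q) -> consistent Lam Del'.
Proof.
by move=> Del_cons sub r [l [lDel' Ll]]; apply: (Del_cons r); exists l; split=> // q /lDel'/sub.
Qed.

Variable Gam : form S -> Prop.
Hypothesis Gam_wf_inL : forall p, Gam p -> wf p && inL p.
Hypothesis Gam_cons : consistent Lam Gam.

Definition henkin_stage n q : Prop :=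
  Gam q \/ exists p x, [/\ wf p, henkin_index p x < n & q = henkin_axiom p x].

Definition henkin_closure q : Prop :=
  Gam q \/ exists p x, wf p /\ q = henkin_axiom p x.

Lemma henkin_closure_wf q : henkin_closure q -> wf q.
Proof.
by case=> [/Gam_wf_inL/andP[]//|[p [x [wp ->]]]]; rewrite wf_henkin_axiom.
Qed.

Lemma henkin_stage_fresh n p x :
  henkin_index p x = n -> forall q, henkin_stage n q -> henkin_witness p x \notin vars q.
Proof.
move=> <- q [/Gam_wf_inL/andP[_ /allP qL]|[p' [x' [_ lt ->]]]].
- by apply/negP => /qL.
- by apply: contraTN lt => /mem_vars_henkin_axiom; rewrite leqNgt.
Qed.

Lemma henkin_stageS n p x :
  henkin_index p x = n -> forall q, henkin_stage n.+1 q ->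
  henkin_stage n q \/ q = henkin_axiom p x.
Proof.
move=> e q [Gq|[p' [x' [wp' lt ->]]]]; first by left; left.
rewrite ltnS leq_eqVlt in lt; case/orP: lt => [/eqP e'|lt].
- by right; rewrite -e in e'; case: (henkin_index_inj e') => -> ->.
- by left; right; exists p', x'.
Qed.

Lemma consistent_henkin_stage n : consistent Lam (henkin_stage n).
Proof.
elim: n => [|n IH].
  by apply: consistent_sub Gam_cons _ => q [//|[p [x []]]].
have [[p [x [wp e]]]|none] :=
  classic (exists p x, wf p /\ henkin_index p x = n).
- apply: (consistent_add_henkin_axiom IH _ (henkin_stage_fresh e)
           (henkin_witness_fresh p x) erefl wp (henkin_stageS e)).
  by move=> q [/Gam_wf_inL/andP[]//|[p' [x' [wp' _ ->]]]]; rewrite wf_henkin_axiom.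
- apply: consistent_sub IH _ => q [Gq|[p [x [wp lt ->]]]]; first by left.
  right; exists p, x; split=> //; rewrite ltnS leq_eqVlt in lt.
  by case/orP: lt => // /eqP e; case: none; exists p, x.
Qed.

Lemma henkin_closure_finite l :
  (forall q, List.In q l -> henkin_closure q) ->
  exists n, forall q, List.In q l -> henkin_stage n q.
Proof.
elim: l => [|a l IH] l_cl; first by exists 0.
have [n ln] := IH (fun q ql => l_cl q (or_intror ql)).
case: (l_cl a (or_introl erefl)) => [Ga|[p [x [wp ->]]]].
- by exists n => q [<-|/ln //]; left.
- exists (maxn n (henkin_index p x).+1) => q [<-|/ln [Gq|[p' [x' [wp' lt ->]]]]].
  + by right; exists p, x; split=> //; rewrite leq_max leqnn orbT.
  + by left.
  + by right; exists p', x'; split=> //; rewrite leq_max lt.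
Qed.

Lemma consistent_henkin_closure : consistent Lam henkin_closure.
Proof.
move=> r [l [l_cl Ll]]; have [n ln] := henkin_closure_finite l_cl.
by apply: (@consistent_henkin_stage n r); exists l.
Qed.

Lemma henkin_closure_forall_property : forall_property henkin_closure.
Proof. by move=> p x wp; exists (henkin_witness p x); split=> //; right; exists p, x. Qed.

End HenkinExtension.

Theorem lemma7p8 (S : signature) (A : finType) (Lam Gam : form S -> Prop) :
  0 < #|A| ->
  normal_tml A Lam ->
  (forall p, Gam p -> wf p && inL p) ->
  consistent Lam Gam ->
  exists Gp : form S -> Prop,
    (forall p, Gp p -> wf p) /\
    consistent Lam Gp /\
    forall_property Gp /\
    (forall p, Gam p -> Gp p).
Proof.
move=> _ [Lam_wf [Lam_taut [Lam_inst [_ [_ [_ [_ [_ [_ [_ [_ [Lam_mp [_ Lam_gen]]]]]]]]]]]]].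
move=> Gam_wf_inL Gam_cons; exists (henkin_closure Gam); split; last split; last split.
- exact: henkin_closure_wf.
- exact: consistent_henkin_closure.
- exact: henkin_closure_forall_property.
- by move=> p; left.
Qed.
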